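(* Let $G$ be a connected graph on vertex set $[n]=\{1,\dots,n\}$ and let $\pi$ be a permutation of $[n]$. If $C_1$ and $C_2$ are two distinct cycles of $\pi$ that are mutually routable in 2 steps, then $|C_1|=|C_2|$.
   Context: Routing via matchings: each vertex $i$ of $G$ initially holds a pebble, and the pebble initially on vertex $i$ must be moved to vertex $\pi(i)$. A step consists of choosing a matching of $G$ and swapping the pebbles at the two endpoints of every matched edge. A cycle of $\pi$ is identified with its set of vertices. Two cycles $C_1,C_2$ of $\pi$ are mutually routable in 2 steps if the pebbles initially on $C_1\cup C_2$ can all be brought to their destinations in at most 2 steps using only edges of $G$ with one endpoint in $C_1$ and the other in $C_2$. *)

From mathcomp Require Import all_boot all_fingroup.
Set Implicit Arguments. Unset Strict Implicit. Unset Printing Implicit Defensive.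

Definition simple_graph (T : finType) (e : rel T) : Prop :=
  symmetric e /\ irreflexive e.

Definition connected_graph (T : finType) (e : rel T) : Prop :=
  forall x y : T, connect e x y.

(* A matching M of G is represented by its partner map m : m x is the vertex
   matched to x, or x itself if x is unmatched.  Swapping pebbles along all
   edges of M moves the pebble at x to m x. *)
Definition matching_between (T : finType) (e : rel T) (C1 C2 : {set T})
  (m : T -> T) : Prop :=
  (forall x, m (m x) = x) /\
  (forall x, m x != x ->
     e x (m x) /\
     ((x \in C1) && (m x \in C2) || (x \in C2) && (m x \in C1))).

(* C1, C2 mutually routable in 2 steps: two matchings (possibly empty, so
   "at most 2 steps") using only C1--C2 edges of G bring every pebble
   starting on C1 u C2 to its destination. *)
Definition routable2 (T : finType) (e : rel T) (pi : {perm T})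
  (C1 C2 : {set T}) : Prop :=
  exists m1 m2 : T -> T,
    [/\ matching_between e C1 C2 m1, matching_between e C1 C2 m2 &
        forall x, x \in C1 :|: C2 -> m2 (m1 x) = pi x].

(* If a cycle C1 is a fixed point, |C1| = 1 <= |C2|.  Otherwise no pebble of
   C1 can stay put in the first step: its second step would have to carry it
   across to C2, whereas its destination lies in C1.  Hence the first matching,
   an involution, maps C1 injectively into C2, so |C1| <= |C2|; by symmetry of
   the hypothesis, equality follows. *)

From mathcomp Require Import all_boot all_fingroup.

Set Implicit Arguments.
Unset Strict Implicit.
Unset Printing Implicit Defensive.

Section PermOrbits.

Variables (T : finType) (s : {perm T}).

Lemma porbits_porbit C x : C \in porbits s -> x \in C -> C = porbit s x.
Proof. by move=> /imsetP[y _ ->] xy; apply/esym/eqP; rewrite eq_porbit_mem. Qed.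

Lemma porbits_perm_closed C x : C \in porbits s -> x \in C -> s x \in C.
Proof.
move=> sC xC; rewrite (porbits_porbit sC xC).
by have := mem_porbit s 1 x; rewrite expg1.
Qed.

Lemma porbits_disjoint C1 C2 :
  C1 \in porbits s -> C2 \in porbits s -> C1 != C2 -> [disjoint C1 & C2].
Proof.
move=> sC1 sC2 neC; apply/pred0P=> x /=; apply/negbTE/andP=> [[xC1 xC2]].
by move/eqP: neC; rewrite (porbits_porbit sC1 xC1) (porbits_porbit sC2 xC2).
Qed.

Lemma porbit_fixed x : s x = x -> porbit s x = [set x].
Proof.
move=> sx; apply/setP=> y; rewrite in_set1; apply/porbitP/eqP=> [[i ->]|->].
  by elim: i => [|i IHi]; rewrite ?expg0 ?perm1 // expgSr permM IHi sx.
by exists 0; rewrite expg0 perm1.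
Qed.

End PermOrbits.

Section Routing.

Variables (T : finType) (e : rel T).
Implicit Types (m : T -> T) (pi : {perm T}).

Lemma matching_betweenC (C1 C2 : {set T}) m :
  matching_between e C1 C2 m -> matching_between e C2 C1 m.
Proof. by case=> mK mE; split=> // x /mE[exm Cexm]; rewrite orbC. Qed.

Lemma routable2C pi (C1 C2 : {set T}) :
  routable2 e pi C1 C2 -> routable2 e pi C2 C1.
Proof.
case=> m1 [m2 [M1 M2 route]]; exists m1, m2.
by split; try apply: matching_betweenC; rewrite // setUC.
Qed.

Lemma matching_between_cross (C1 C2 : {set T}) m x :
  [disjoint C1 & C2] -> matching_between e C1 C2 m ->
  x \in C1 -> m x != x -> m x \in C2.
Proof.
move=> dC [_ mE] xC1 /mE[_ /orP[/andP[_ //] | /andP[xC2 _]]].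
by rewrite (disjointFr dC xC1) in xC2.
Qed.

Lemma routable2_leq_card pi (C1 C2 : {set T}) :
  C1 \in porbits pi -> C2 \in porbits pi -> C1 != C2 ->
  routable2 e pi C1 C2 -> #|C1| <= #|C2|.
Proof.
move=> piC1 piC2 neC [m1 [m2 [M1 M2 route]]].
have dC := porbits_disjoint piC1 piC2 neC.
case: (boolP [exists x in C1, pi x == x]) => [/exists_inP[x xC1 /eqP pix] | nofix].
  rewrite (porbits_porbit piC1 xC1) porbit_fixed // cards1.
  by case/imsetP: piC2 => y _ ->; rewrite lt0n card_porbit_neq0.
have moves x : x \in C1 -> m1 x != x.
  move=> xC1; apply/eqP=> m1x.
  have xU : x \in C1 :|: C2 by rewrite inE xC1.
  have m2x : m2 x = pi x by rewrite -route // m1x.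
  have pixC1 : pi x \in C1 := porbits_perm_closed piC1 xC1.
  have : m2 x \in C2.
    apply: (matching_between_cross dC M2 xC1).
    by rewrite m2x; apply/negP=> pix; case/exists_inP: nofix; exists x.
  by rewrite m2x (disjointFr dC pixC1).
have m1C1 : m1 @: C1 \subset C2.
  apply/subsetP=> _ /imsetP[x xC1 ->].
  exact: (matching_between_cross dC M1 xC1 (moves x xC1)).
rewrite -(card_imset _ (can_inj M1.1)).
exact: subset_leq_card.
Qed.

End Routing.

Theorem lemma1 (n : nat) (G : rel 'I_n) (pi : {perm 'I_n})
  (C1 C2 : {set 'I_n}) :
  simple_graph G -> connected_graph G ->
  C1 \in porbits pi -> C2 \in porbits pi -> C1 != C2 ->
  routable2 G pi C1 C2 ->
  #|C1| = #|C2|.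
Proof.
move=> _ _ piC1 piC2 neC route; apply/eqP; rewrite eqn_leq.
rewrite (routable2_leq_card piC1 piC2 neC route) /=.
by apply: (routable2_leq_card piC2 piC1 _ (routable2C route)); rewrite eq_sym.
Qed.
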